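(* Let $\Gamma$ be a gain operator on $\ell^\infty_+(\mathcal I)$ and assume: (i) $\Gamma$ satisfies the $\oplus$-MBI property; (ii) there is $\rho\in\mathcal K_\infty$ such that $\Sigma(\Gamma_\rho)$ is UGAS; (iii) the family $\{\gamma_{ij}^{-1}: ji\in E(\mathcal G)\}$ is pointwise equicontinuous; (iv) there is $\zeta\in\mathcal K_\infty$ such that for all $ji\in E(\mathcal G)$ and all $0\le s^1\le s^2$, $\mu_i(s^2_{|\mathcal I_i})-\mu_i(s^1_{|\mathcal I_i})\ge\zeta(s^2_j-s^1_j)$; (v) the path $\sigma_*(r):=\bigoplus_{n=0}^\infty\hat\Gamma^n(r\mathbf 1)$, $r\ge0$, is norm-continuous. Then for each $r\ge0$ the operator $s\mapsto r\mathbf 1\oplus\Gamma(s)$ has precisely one fixed point.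
   Context: Let $\mathcal I$ be a nonempty countable index set; $\ell^\infty_+(\mathcal I)$ is the cone of nonnegative real families $s=(s_i)_{i\in\mathcal I}$ with $\|s\|:=\sup_i|s_i|<\infty$, ordered componentwise; $\mathbf 1$ is the all-ones vector; $\oplus$ is the componentwise maximum, $\bigoplus$ the componentwise supremum. $\mathcal K$: continuous strictly increasing $\gamma:\mathbb R_+\to\mathbb R_+$ with $\gamma(0)=0$; $\mathcal K_\infty$: unbounded elements of $\mathcal K$, acting componentwise; $\mathcal{KL}$: continuous $\beta$ with $\beta(\cdot,t)\in\mathcal K$ and $\beta(r,\cdot)$ continuous strictly decreasing to $0$ for $r>0$. For $\mathcal J\subset\mathcal I$, $s_{|\mathcal J}$ agrees with $s$ on $\mathcal J$ and is $0$ elsewhere. Gain operator: for each $i$ a finite (possibly empty) $\mathcal I_i\subset\mathcal I\setminus\{i\}$; directed graph $\mathcal G$ with vertices $\mathcal I$ and edges $ji$, $j\in\mathcal I_i$; a pointwise equicontinuous family $\gamma_{ij}\in\mathcal K_\infty$ ($ji\in E(\mathcal G)$) (pointwise equicontinuity: for all $r_0\ge0$, $\varepsilon>0$ there is $\delta>0$ with $|f(r)-f(r_0)|\le\varepsilon$ whenever $|r-r_0|\le\delta$, for all members $f$); functions $\mu_i:\ell^\infty_+(\mathcal I)\to[0,\infty]$ with (M1) some $\xi\in\mathcal K_\infty$ has $\mu_i(0)=0$, $\mu_i(s)\ge\xi(\|s\|)$; (M2) $\mu_i$ monotone; (M3) for each finite $\mathcal J$, $\mu_i$ restricted to vectors vanishing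 off $\mathcal J$ is finite-valued and continuous; (M4) for each norm-bounded $A$ and $\varepsilon>0$ there is $\delta>0$ with $\sup_i|\mu_i(s_{|\mathcal I_i})-\mu_i(s^0_{|\mathcal I_i})|\le\varepsilon$ whenever $s^0\in A$, $\|s-s^0\|\le\delta$. $\Gamma_i(s):=\mu_i([\gamma_{ij}(s_j)]_{j\in\mathcal I_i})$ (argument zero outside $\mathcal I_i$). $\Gamma_\rho:=(\mathrm{id}+\rho)\circ\Gamma$, $\hat\Gamma(s):=s\oplus\Gamma(s)$. $\Sigma(T)$ is the system $s^{n+1}=T(s^n)$; UGAS: $\|T^n(s)\|\le\beta(\|s\|,n)$ for some $\beta\in\mathcal{KL}$. $\oplus$-MBI property: there is $\varphi\in\mathcal K_\infty$ such that for all $s,b$, $s\le b\oplus\Gamma(s)$ implies $\|s\|\le\varphi(\|b\|)$. *)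

From HB Require Import structures.
From mathcomp Require Import all_boot all_order all_algebra.
From mathcomp Require Import boolp classical_sets cardinality reals constructive_ereal.
Set Implicit Arguments. Unset Strict Implicit. Unset Printing Implicit Defensive.
Import Order.TTheory GRing.Theory Num.Theory.
Local Open Scope ring_scope.
Local Open Scope classical_set_scope.

Section ComparisonFunctions.
Variable R : realType.

Definition cont_nonneg (f : R -> R) : Prop :=
  forall r0, 0 <= r0 -> forall e, 0 < e -> exists d, 0 < d /\
    forall r, 0 <= r -> `|r - r0| <= d -> `|f r - f r0| <= e.

Definition is_K (f : R -> R) : Prop :=
  f 0 = 0 /\ cont_nonneg f /\ (forall a b, 0 <= a -> a < b -> f a < f b).

Definition is_Kinf (f : R -> R) : Prop :=
  is_K f /\ (forall M, exists r, 0 <= r /\ M <= f r).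

Definition is_KL (b : R -> R -> R) : Prop :=
  (forall r0 t0, 0 <= r0 -> 0 <= t0 -> forall e, 0 < e -> exists d, 0 < d /\
     forall r t, 0 <= r -> 0 <= t -> `|r - r0| <= d -> `|t - t0| <= d ->
       `|b r t - b r0 t0| <= e) /\
  (forall t, 0 <= t -> is_K (fun r => b r t)) /\
  (forall r, 0 < r ->
     (forall t1 t2, 0 <= t1 -> t1 < t2 -> b r t2 < b r t1) /\
     (forall e, 0 < e -> exists T, 0 <= T /\ forall t, T <= t -> b r t <= e)).

Definition pw_equicont (A : Type) (P : A -> Prop) (F : A -> R -> R) : Prop :=
  forall r0, 0 <= r0 -> forall e, 0 < e -> exists d, 0 < d /\
    forall a, P a -> forall r, 0 <= r -> `|r - r0| <= d -> `|F a r - F a r0| <= e.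

End ComparisonFunctions.

Section Sequences.
Variables (R : realType) (I : Type).

Definition linf_pos (s : I -> R) : Prop :=
  (forall i, 0 <= s i) /\ exists M, forall i, s i <= M.

Definition supnorm (s : I -> R) : R := sup (range (fun i => `|s i|)).

Definition restr (J : set I) (s : I -> R) : I -> R :=
  fun i => if `[< J i >] then s i else 0.

Definition vmax (s t : I -> R) : I -> R := fun i => Num.max (s i) (t i).

Definition cstv (r : R) : I -> R := fun _ => r.

(* Gain operator Gamma_i(s) = mu_i([gamma_ij(s_j)]_{j in I_i}); the entries are
   indexed by edges ji, i.e. gam i j = gamma_ij for j in I_i. *)
Definition gainop (Ii : I -> set I) (gam : I -> I -> R -> R)
  (mu : I -> (I -> R) -> \bar R) (s : I -> R) : I -> R :=
  fun i => fine (mu i (restr (Ii i) (fun j => gam i j (s j)))).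

Definition is_gain_operator (Ii : I -> set I) (gam : I -> I -> R -> R)
  (mu : I -> (I -> R) -> \bar R) : Prop :=
  (forall i, finite_set (Ii i) /\ ~ Ii i i) /\
  (forall i j, Ii i j -> is_Kinf (gam i j)) /\
  pw_equicont (fun ij : I * I => Ii ij.1 ij.2) (fun ij => gam ij.1 ij.2) /\
  (exists xi, is_Kinf xi /\ forall i, mu i (cstv 0) = 0%E /\
     forall s, linf_pos s -> ((xi (supnorm s))%:E <= mu i s)%E) /\
  (forall i s1 s2, linf_pos s1 -> linf_pos s2 -> (forall k, s1 k <= s2 k) ->
     (mu i s1 <= mu i s2)%E) /\
  (forall i (J : set I), finite_set J ->
     (forall s, linf_pos s -> (forall k, ~ J k -> s k = 0) -> mu i s \is a fin_num) /\
     (forall s0, linf_pos s0 -> (forall k, ~ J k -> s0 k = 0) ->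
        forall e, 0 < e -> exists d, 0 < d /\
          forall s, linf_pos s -> (forall k, ~ J k -> s k = 0) ->
            supnorm (fun k => s k - s0 k) <= d ->
            `|fine (mu i s) - fine (mu i s0)| <= e)) /\
  (forall A : set (I -> R), A `<=` linf_pos ->
     (exists B, forall s, A s -> supnorm s <= B) ->
     forall e, 0 < e -> exists d, 0 < d /\
       forall s0 s, A s0 -> linf_pos s -> supnorm (fun k => s k - s0 k) <= d ->
         forall i, `|fine (mu i (restr (Ii i) s)) - fine (mu i (restr (Ii i) s0))| <= e).

Definition UGAS (T : (I -> R) -> (I -> R)) : Prop :=
  exists beta, is_KL beta /\
    forall s, linf_pos s -> forall n : nat,
      supnorm (iter n T s) <= beta (supnorm s) n%:R.

Definition oplus_MBI (G : (I -> R) -> (I -> R)) : Prop :=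
  exists phi, is_Kinf phi /\
    forall s b, linf_pos s -> linf_pos b -> (forall i, s i <= Num.max (b i) (G s i)) ->
      supnorm s <= phi (supnorm b).

Definition Grho (rho : R -> R) (G : (I -> R) -> (I -> R)) (s : I -> R) : I -> R :=
  fun i => G s i + rho (G s i).

Definition Ghat (G : (I -> R) -> (I -> R)) (s : I -> R) : I -> R := vmax s (G s).

Definition sigma_star (G : (I -> R) -> (I -> R)) (r : R) : I -> R :=
  fun i => sup (range (fun n : nat => iter n (Ghat G) (cstv r) i)).

End Sequences.

(* sigma_*(r), the supremum of the increasing iterates of hat Gamma from r1, is
   bounded by the (+)-MBI property and, since Gamma is continuous along increasing
   sequences, it is the least fixed point of s |-> r1 (+) Gamma(s).
   Let f be any fixed point and t the least t >= r with f <= sigma_*(t); it exists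
   because sigma_* is continuous. If t > r, then f stays uniformly below sigma_*(t).
   At nodes i where f = Gamma(f) along all paths of length < N into i, f_i is
   bounded by Gamma_rho^N(f)_i, which is small for large N by UGAS. Every other node
   is reached by a short path from a node where f = r < t <= sigma_*(t), and
   (iii), (iv) propagate this gap along the path: a uniform gap in s_j gives a
   uniform gap in Gamma_i(s). By continuity of sigma_*, t can then be decreased,
   contradicting its minimality. *)
From HB Require Import structures.
From mathcomp Require Import all_boot all_order all_algebra.
From mathcomp Require Import boolp classical_sets cardinality reals constructive_ereal.
From mathcomp Require Import lra.
From mathcomp Require finmap.
Import Order.TTheory GRing.Theory Num.Theory.
Set Implicit Arguments. Unset Strict Implicit. Unset Printing Implicit Defensive.
Local Open Scope ring_scope.
Local Open Scope classical_set_scope.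

Section SupNorm.
Variables (R : realType) (I : Type).
Implicit Types (s t : I -> R) (J : set I).

Lemma supnorm_ge0 s : 0 <= supnorm s.
Proof.
rewrite /supnorm; have [hs|hs] := pselect (has_sup (range (fun i => `|s i|))).
  have [[_ [i _ _]] _] := hs.
  by apply: le_trans (normr_ge0 (s i)) _; apply: sup_upper_bound => //; exists i.
by rewrite sup_out.
Qed.

Lemma normr_le_supnorm s M : (forall i, `|s i| <= M) -> forall i, `|s i| <= supnorm s.
Proof.
move=> sM i; apply: sup_upper_bound; last by exists i.
by split; [exists `|s i|, i | exists M => _ [j _ <-]].
Qed.

Lemma supnorm_le s M : 0 <= M -> (forall i, `|s i| <= M) -> supnorm s <= M.
Proof.
move=> M0 sM; rewrite /supnorm.
have [[i _]|noI] := pselect (exists i : I, True).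
  by apply: ge_sup; [exists `|s i|, i | move=> _ [j _ <-]].
rewrite (_ : range (fun i => `|s i|) = set0) ?sup0 //.
by apply/seteqP; split => // x [j _ _]; case: noI; exists j.
Qed.

Lemma linf_pos_le_supnorm s : linf_pos s -> forall i, s i <= supnorm s.
Proof.
move=> [s0 [M sM]] i; rewrite -(ger0_norm (s0 i)).
by apply: (@normr_le_supnorm _ M) => j; rewrite ger0_norm.
Qed.

Lemma linf_pos_dist_le_supnorm s t : linf_pos s -> linf_pos t ->
  forall i, `|s i - t i| <= supnorm (fun i => s i - t i).
Proof.
move=> [s0 [M sM]] [t0 [N tN]]; apply: (@normr_le_supnorm _ (M + N)) => i.
by have := s0 i; have := t0 i; have := sM i; have := tN i;
  rewrite ler_norml => *; apply/andP; split; lra.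
Qed.

Lemma linf_pos_bounded s : linf_pos s -> exists2 B, 0 <= B & forall i, 0 <= s i <= B.
Proof.
move=> [s0 [M sM]]; exists (Num.max 0 M); first by rewrite le_max lexx.
by move=> i; rewrite s0 le_max sM orbT.
Qed.

Lemma linf_pos_cst c : 0 <= c -> linf_pos (@cstv R I c).
Proof. by move=> c0; split => //; exists c. Qed.

Lemma supnorm_cst c : inhabited I -> 0 <= c -> supnorm (@cstv R I c) = c.
Proof.
move=> [i] c0; apply/le_anti; rewrite (linf_pos_le_supnorm (linf_pos_cst c0) i) andbT.
by apply: supnorm_le => // j; rewrite ger0_norm.
Qed.

Lemma linf_pos_vmax s t : linf_pos s -> linf_pos t -> linf_pos (vmax s t).
Proof.
move=> [s0 [M sM]] [t0 [N tN]]; split=> [i|]; first by rewrite le_max s0.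
by exists (Num.max M N) => i; rewrite ge_max !le_max sM tN orbT.
Qed.

Lemma restr_in J s j : J j -> restr J s j = s j.
Proof. by move=> Jj; rewrite /restr asboolT. Qed.

Lemma restr_out J s j : ~ J j -> restr J s j = 0.
Proof. by move=> Jj; rewrite /restr asboolF. Qed.

Lemma restr_id J s : restr J (restr J s) = restr J s.
Proof. by apply/funext => k; rewrite /restr; case: asboolP. Qed.

Lemma restr_cst0 J : restr J (cstv 0) = cstv (0 : R).
Proof. by apply/funext => j; rewrite /restr /cstv; case: asboolP. Qed.

Lemma linf_pos_restr J s : linf_pos s -> linf_pos (restr J s).
Proof.
move=> /linf_pos_bounded[B B0 sB]; split=> [k|]; last exists B => k;
  by rewrite /restr; case: asboolP => // _; case/andP: (sB k).
Qed.

End SupNorm.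

Section ComparisonFunctions.
Variable R : realType.
Implicit Types (f : R -> R).

Lemma K_ge0 f : is_K f -> forall a, 0 <= a -> 0 <= f a.
Proof.
move=> [f0 [_ finc]] a; rewrite le_eqVlt => /orP[/eqP <-|a0]; first by rewrite f0.
by rewrite -f0; apply/ltW/finc.
Qed.

Lemma K_gt0 f : is_K f -> forall a, 0 < a -> 0 < f a.
Proof. by move=> [f0 [_ finc]] a a0; rewrite -f0; apply/finc. Qed.

Lemma K_le f : is_K f -> forall a b, 0 <= a -> a <= b -> f a <= f b.
Proof.
move=> [_ [_ finc]] a b a0; rewrite le_eqVlt => /orP[/eqP ->//|ab].
exact/ltW/finc.
Qed.

Lemma KL_le_nat (b : R -> R -> R) : is_KL b ->
  forall r e, 0 <= r -> 0 < e -> exists N : nat, b r N%:R <= e.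
Proof.
move=> [_ [bK bdec]] r e; rewrite le_eqVlt => /orP[/eqP <-|r0] e0.
  by exists 0%N; have [-> _] := bK 0 (lexx 0); apply: ltW.
have [T [T0 bT]] := (bdec r r0).2 e e0.
by exists (Num.bound T); apply/bT/ltW/archi_boundP.
Qed.

Lemma real_induction (P : R -> Prop) X : 0 <= X -> P 0 ->
  (forall x y, x <= y -> P y -> P x) ->
  (forall m, 0 <= m -> m <= X -> exists2 d, 0 < d & P (m - d) -> P (m + d)) ->
  P X.
Proof.
move=> X0 P0 Pdown Pstep; pose S := [set x | x <= X /\ P x].
have hS : has_sup S by split; [exists 0 | exists X => x []].
have m0 : 0 <= sup S by apply: sup_upper_bound.
have mX : sup S <= X by apply: ge_sup; [exists 0 | move=> x []].
have [d d0 Pmd] := Pstep _ m0 mX.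
have [x [_ Px] mdx] := sup_adherent d0 hS.
have {}Pmd : P (sup S + d) by apply: Pmd; apply: Pdown (ltW mdx) Px.
have : Num.min (sup S + d) X <= sup S.
  apply: sup_upper_bound => //; split; first by rewrite ge_min lexx orbT.
  by apply: Pdown Pmd; rewrite ge_min lexx.
rewrite ge_min => /orP[|Xm]; first lra.
by apply: Pdown Pmd; lra.
Qed.

Lemma pw_equicont_unif (A : Type) (P : A -> Prop) (F : A -> R -> R) :
  pw_equicont P F -> forall X, 0 <= X -> forall e, 0 < e -> exists2 d, 0 < d &
  forall a, P a -> forall x y, 0 <= x <= X -> 0 <= y <= X ->
    `|x - y| <= d -> `|F a x - F a y| <= e.
Proof.
move=> Feq X X0 e e0.
apply: (@real_induction (fun X => exists2 d, 0 < d & forall a, P a ->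
  forall x y, 0 <= x <= X -> 0 <= y <= X -> `|x - y| <= d -> `|F a x - F a y| <= e)).
- exact: X0.
- exists 1 => // a _ x y /andP[x0 x0'] /andP[y0 y0'] _.
  have -> : x = y by apply/le_anti; rewrite (le_trans x0' y0) (le_trans y0' x0).
  by rewrite subrr normr0 ltW.
- move=> x y xy [d d0 Fd]; exists d => // a Pa u v /andP[u0 ux] /andP[v0 vx].
  by apply: Fd => //; rewrite ?u0 ?v0 ?(le_trans ux xy) ?(le_trans vx xy).
- move=> m m0 _; have e2 : 0 < e / 2 by lra.
  have [dl [dl0 Fm]] := Feq m m0 (e / 2) e2.
  exists (dl / 2) => [|[d d0 Fd]]; first lra.
  exists (Num.min d (dl / 2)) => [|a Pa x y /andP[x0 xm] /andP[y0 ym]].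
    by rewrite lt_min d0 /=; lra.
  rewrite le_min => /andP[xyd]; rewrite ler_norml => /andP[xy1 xy2].
  have [/andP[xl yl]|] := boolP ((x <= m - dl / 2) && (y <= m - dl / 2)).
    by apply: Fd => //; rewrite ?x0 ?y0.
  (* one of the points lies above [m - dl/2], so both lie within [dl] of [m] *)
  rewrite negb_and -!ltNge => far.
  have xm' : `|x - m| <= dl.
    by rewrite ler_norml; case/orP: far => ?; apply/andP; split; lra.
  have ym' : `|y - m| <= dl.
    by rewrite ler_norml; case/orP: far => ?; apply/andP; split; lra.
  have := Fm a Pa x x0 xm'; have := Fm a Pa y y0 ym'.
  have := ler_distD (F a m) (F a x) (F a y); rewrite (distrC (F a m)); lra.
Qed.

Lemma step_growth_bound (f : R -> R) X d : 0 < d ->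
  (forall x y, 0 <= x <= X -> 0 <= y <= X -> `|x - y| <= d -> f y <= f x + 1) ->
  forall y, 0 <= y <= X -> f y <= f 0 + (Num.bound (X / d))%:R.
Proof.
move=> d0 fstep y /andP[y0 yX].
suff: forall k : nat, forall y, 0 <= y <= X -> y <= k%:R * d -> f y <= f 0 + k%:R.
  apply; first by rewrite y0.
  have Xd0 : 0 <= X / d by rewrite divr_ge0 ?(le_trans y0 yX) ?ltW.
  rewrite -ler_pdivrMr //; apply: le_trans (ltW (archi_boundP Xd0)).
  by rewrite ler_pM2r ?invr_gt0.
elim=> [|k IH] x /andP[x0 xX] xk.
  have -> : x = 0 by apply/le_anti; rewrite x0 andbT; move: xk; rewrite mul0r.
  by rewrite addr0.
pose z := Num.max 0 (x - d).
have z0X : 0 <= z <= X by rewrite le_max lexx ge_max (le_trans x0 xX) /=; lra.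
have zk : z <= k%:R * d.
  by rewrite ge_max mulr_ge0 ?ler0n ?(ltW d0) //=; move: xk; rewrite -natr1; lra.
have zx : `|z - x| <= d.
  have [h|h] := leP 0 (x - d); rewrite /z ?(max_idPr h) ?(max_idPl (ltW h));
  by rewrite ler_norml; apply/andP; split; lra.
have := fstep z x z0X (introT andP (conj x0 xX)) zx; have := IH z z0X zk.
rewrite -natr1; lra.
Qed.

Lemma descent_to_lbound (Q : set R) r : Q !=set0 -> (forall t, Q t -> r <= t) ->
  (forall t, r <= t -> (forall d, 0 < d -> exists2 t', Q t' & t <= t' <= t + d) -> Q t) ->
  (forall t, Q t -> r < t -> exists2 t', Q t' & t' < t) -> Q r.
Proof.
move=> Qne Qr Qclosed Qdesc.
have Qinf : has_inf Q by split => //; exists r.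
have rinf : r <= inf Q by apply: lb_le_inf.
have Qt : Q (inf Q).
  apply: Qclosed => // d d0; have [t Qt tlt] := inf_adherent d0 Qinf.
  by exists t => //; rewrite (ge_inf Qinf.2 Qt) ltW.
move: rinf; rewrite le_eqVlt => /orP[/eqP -> //|rlt].
have [t Qt' tlt] := Qdesc _ Qt rlt.
by have := ge_inf Qinf.2 Qt'; rewrite leNgt tlt.
Qed.

End ComparisonFunctions.

Lemma finite_eventually (T : choiceType) (J : set T) (P : T -> nat -> Prop) :
  finite_set J -> (forall j, J j -> forall n m, (n <= m)%N -> P j n -> P j m) ->
  (forall j, J j -> exists n, P j n) -> exists N, forall j, J j -> P j N.
Proof.
suff Pl : forall l : seq T,
    (forall j, j \in l -> forall n m, (n <= m)%N -> P j n -> P j m) ->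
    (forall j, j \in l -> exists n, P j n) -> exists N, forall j, j \in l -> P j N.
  by move=> /finite_fsetP[X ->]; apply: (Pl (finmap.enum_fset X)).
elim=> [|a l IH] Pmono Pex; first by exists 0%N.
have lal j : j \in l -> j \in a :: l by rewrite inE => ->; rewrite orbT.
have [N1 HN1] := IH (fun j jl => Pmono j (lal j jl)) (fun j jl => Pex j (lal j jl)).
have [N2 HN2] := Pex a (mem_head a l).
exists (maxn N1 N2) => j; rewrite in_cons => /orP[/eqP->|jl].
  by apply: Pmono HN2; rewrite ?mem_head ?leq_maxr.
by apply: Pmono (HN1 j jl); rewrite ?lal ?leq_maxl.
Qed.

Section GainOperator.
Variables (R : realType) (I : choiceType) (Ii : I -> set I) (gam : I -> I -> R -> R).
Variable mu : I -> (I -> R) -> \bar R.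
Hypothesis Ii_fin : forall i, finite_set (Ii i).
Hypothesis gam_K : forall i j, Ii i j -> is_K (gam i j).
Hypothesis gam_equicont :
  pw_equicont (fun ij : I * I => Ii ij.1 ij.2) (fun ij => gam ij.1 ij.2).
Hypothesis mu0 : forall i, mu i (cstv 0) = 0%E.
Hypothesis mu_mono : forall i s1 s2, linf_pos s1 -> linf_pos s2 ->
  (forall k, s1 k <= s2 k) -> (mu i s1 <= mu i s2)%E.
Hypothesis mu_fin : forall i s, linf_pos s -> (forall k, ~ Ii i k -> s k = 0) ->
  mu i s \is a fin_num.
Hypothesis mu_cont : forall i s0, linf_pos s0 -> (forall k, ~ Ii i k -> s0 k = 0) ->
  forall e, 0 < e -> exists d, 0 < d /\
    forall s, linf_pos s -> (forall k, ~ Ii i k -> s k = 0) ->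
      supnorm (fun k => s k - s0 k) <= d -> `|fine (mu i s) - fine (mu i s0)| <= e.
Hypothesis mu_unif : forall A : set (I -> R), A `<=` (@linf_pos R I) ->
  (exists B, forall s, A s -> supnorm s <= B) ->
  forall e, 0 < e -> exists d, 0 < d /\
    forall s0 s, A s0 -> linf_pos s -> supnorm (fun k => s k - s0 k) <= d ->
      forall i, `|fine (mu i (restr (Ii i) s)) - fine (mu i (restr (Ii i) s0))| <= e.

Definition gainarg i (s : I -> R) : I -> R := restr (Ii i) (fun j => gam i j (s j)).

Local Notation G := (gainop Ii gam mu).

Lemma gainopE s i : G s i = fine (mu i (gainarg i s)).
Proof. by []. Qed.

Lemma gainarg_out i s k : ~ Ii i k -> gainarg i s k = 0.
Proof. exact: restr_out. Qed.

Lemma gam_bounded B : 0 <= B -> exists2 Y, 0 <= Y &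
  forall i j, Ii i j -> forall x, 0 <= x <= B -> gam i j x <= Y.
Proof.
move=> B0; have [d d0 gd] := pw_equicont_unif gam_equicont B0 ltr01.
exists (Num.bound (B / d))%:R => // i j ij x xB.
have [g0 _] := gam_K ij; rewrite -[_%:R]add0r -g0.
apply: (step_growth_bound d0) xB => y z y0 z0 yz.
by have := gd (i, j) ij y z y0 z0 yz; rewrite ler_norml => /andP[? _]; lra.
Qed.

Lemma gainarg_bounded s : linf_pos s ->
  exists2 Y, 0 <= Y & forall i k, 0 <= gainarg i s k <= Y.
Proof.
move=> /linf_pos_bounded[B B0 sB]; have [Y Y0 gY] := gam_bounded B0.
exists Y => // i k; rewrite /gainarg /restr; case: asboolP => ik; last by rewrite lexx.
by have /andP[sk0 _] := sB k; rewrite (K_ge0 (gam_K ik)) // gY.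
Qed.

Lemma linf_pos_gainarg i s : linf_pos s -> linf_pos (gainarg i s).
Proof.
move=> /gainarg_bounded[Y _ gY]; split=> [k|]; last exists Y => k;
  by case/andP: (gY i k).
Qed.

Lemma gainarg_fin i s : linf_pos s -> mu i (gainarg i s) \is a fin_num.
Proof.
by move=> s_linf; apply: mu_fin (linf_pos_gainarg i s_linf) (@gainarg_out i s).
Qed.

Lemma gainarg_le i s t : linf_pos s -> (forall j, Ii i j -> s j <= t j) ->
  forall k, gainarg i s k <= gainarg i t k.
Proof.
move=> [s0 _] st k; rewrite /gainarg /restr; case: asboolP => // ik.
exact: (K_le (gam_K ik)) (st k ik).
Qed.

Lemma gainop_ge0 s i : linf_pos s -> 0 <= G s i.
Proof.
move=> s_linf; rewrite gainopE; apply: fine_ge0; rewrite -(mu0 i).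
apply: mu_mono; [exact: linf_pos_cst | exact: linf_pos_gainarg |].
by move=> k; case: (linf_pos_gainarg i s_linf) => + _; apply.
Qed.

Lemma gainop_le s t i : linf_pos s -> linf_pos t ->
  (forall j, Ii i j -> s j <= t j) -> G s i <= G t i.
Proof.
move=> s_linf t_linf st; rewrite !gainopE.
apply: fine_le; [exact: gainarg_fin.. |].
by apply: mu_mono; [exact: linf_pos_gainarg.. | exact: gainarg_le].
Qed.

Lemma mu_restr_cst_bounded Y : 0 <= Y ->
  exists C, forall i, fine (mu i (restr (Ii i) (cstv Y))) <= C.
Proof.
move=> Y0; pose A := [set v : I -> R | exists2 c, 0 <= c <= Y & v = cstv c].
have A_linf : A `<=` (@linf_pos R I) by move=> _ [c /andP[c0 _] ->]; apply: linf_pos_cst.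
have A_bd : exists B, forall s, A s -> supnorm s <= B.
  by exists Y => _ [c /andP[c0 cY] ->]; apply: supnorm_le => // k; rewrite ger0_norm.
have [d [d0 mud]] := mu_unif A_linf A_bd ltr01.
exists (Num.bound (Y / d))%:R => i.
pose f c := fine (mu i (restr (Ii i) (cstv c))).
have f0 : f 0 = 0 by rewrite /f restr_cst0 mu0.
rewrite -[_%:R]add0r -f0; apply: (step_growth_bound (f := f) d0); last by rewrite Y0 lexx.
move=> x y xY /andP[y0 yY] xy.
have Ax : A (cstv x) by exists x.
have xyd : supnorm (fun k => @cstv R I y k - cstv x k) <= d.
  by apply: supnorm_le => [|k]; [exact: ltW | rewrite /cstv distrC].
by have := mud _ _ Ax (linf_pos_cst I y0) xyd i; rewrite /f ler_norml => /andP[_]; lra.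
Qed.

Lemma gainop_bounded B : 0 <= B -> exists C, forall s, linf_pos s ->
  (forall j, s j <= B) -> forall i, G s i <= C.
Proof.
move=> B0; have [Y Y0 gY] := gam_bounded B0.
have [C muC] := mu_restr_cst_bounded Y0.
exists C => s s_linf sB i; apply: le_trans (muC i); rewrite gainopE.
have cY_linf : linf_pos (restr (Ii i) (@cstv R I Y)).
  exact/linf_pos_restr/linf_pos_cst.
apply: fine_le; [exact: gainarg_fin | exact: mu_fin cY_linf (@restr_out _ _ _ _) |].
apply: mu_mono => [|//|k]; first exact: linf_pos_gainarg.
rewrite /gainarg /restr /cstv; case: asboolP => // ik.
by case: s_linf => s0 _; rewrite gY ?s0 ?sB.
Qed.

Lemma linf_pos_gainop s : linf_pos s -> linf_pos (G s).
Proof.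
move=> s_linf; have [B B0 sB] := linf_pos_bounded s_linf.
have [C GC] := gainop_bounded B0; split=> [i|]; first exact: gainop_ge0.
by exists C => i; apply: GC => // j; case/andP: (sB j).
Qed.

Lemma gainop_approx (sq : nat -> I -> R) u :
  (forall n, linf_pos (sq n)) -> linf_pos u ->
  (forall n m j, (n <= m)%N -> sq n j <= sq m j) -> (forall n j, sq n j <= u j) ->
  (forall j e, 0 < e -> exists n, u j - e <= sq n j) ->
  forall i e, 0 < e -> exists n, G u i <= G (sq n) i + e.
Proof.
move=> sq_linf u_linf sq_mono sq_le sq_approx i e e0.
have [d [d0 mud]] := mu_cont (linf_pos_gainarg i u_linf) (@gainarg_out i u) e0.
have [N gN] : exists N, forall j, Ii i j -> gam i j (u j) - d <= gam i j (sq N j).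
  apply: finite_eventually (Ii_fin i) _ _ => [j ij n m nm gn|j ij].
    apply: le_trans gn _.
    by apply: (K_le (gam_K ij)) (sq_mono _ _ _ nm); case: (sq_linf n).
  have [_ [gcont _]] := gam_K ij; have [u0 _] := u_linf.
  have [eta [eta0 geta]] := gcont (u j) (u0 j) d d0.
  have [n un] := sq_approx j eta eta0; exists n; have [sq0 _] := sq_linf n.
  have usq : `|sq n j - u j| <= eta.
    by rewrite ler_norml; apply/andP; split; have := sq_le n j; lra.
  by have := geta (sq n j) (sq0 j) usq; rewrite ler_norml => /andP[+ _]; lra.
have sqd : supnorm (fun k => gainarg i (sq N) k - gainarg i u k) <= d.
  apply: supnorm_le => [|k]; first exact: ltW.
  rewrite /gainarg /restr; case: asboolP => ik; last by rewrite subrr normr0 ltW.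
  have [sq0 _] := sq_linf N; have := gN k ik.
  have := K_le (gam_K ik) (sq0 k) (sq_le N k).
  by rewrite ler_norml => *; apply/andP; split; lra.
exists N; have := mud _ (linf_pos_gainarg i (sq_linf N)) (@gainarg_out i _) sqd.
by rewrite !gainopE ler_norml => /andP[+ _]; lra.
Qed.

Section MinimalFixedPoint.
Variable phi : R -> R.
Hypothesis I_inh : inhabited I.
Hypothesis gain_MBI : forall s b, linf_pos s -> linf_pos b ->
  (forall i, s i <= Num.max (b i) (G s i)) -> supnorm s <= phi (supnorm b).

Definition ghat_iter (t : R) (n : nat) : I -> R := iter n (Ghat G) (cstv t).

Local Notation S := (sigma_star G).

Lemma ghat_iterS t n : ghat_iter t n.+1 = vmax (ghat_iter t n) (G (ghat_iter t n)).
Proof. by []. Qed.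

Lemma linf_pos_ghat_iter t : 0 <= t -> forall n, linf_pos (ghat_iter t n).
Proof.
move=> t0; elim=> [|n IH]; first exact: linf_pos_cst.
by rewrite ghat_iterS; apply: linf_pos_vmax => //; apply: linf_pos_gainop.
Qed.

Lemma ghat_iter_le_succ t n j : ghat_iter t n j <= ghat_iter t n.+1 j.
Proof. by rewrite ghat_iterS /vmax le_max lexx. Qed.

Lemma ghat_iter_mono t n m j : (n <= m)%N -> ghat_iter t n j <= ghat_iter t m j.
Proof.
move=> nm; rewrite -(subnKC nm); elim: (m - n)%N => [|k IH]; first by rewrite addn0.
by apply: le_trans IH _; rewrite addnS; apply: ghat_iter_le_succ.
Qed.

Lemma ghat_iter_le_max t : 0 <= t ->
  forall n j, ghat_iter t n j <= Num.max t (G (ghat_iter t n) j).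
Proof.
move=> t0; elim=> [|k IH] j; first by rewrite le_max lexx.
have Gk : G (ghat_iter t k) j <= G (ghat_iter t k.+1) j.
  apply: gainop_le => [||l _]; [exact: linf_pos_ghat_iter.. | exact: ghat_iter_le_succ].
rewrite {1}ghat_iterS /vmax ge_max; apply/andP; split; last by rewrite le_max Gk orbT.
by apply: le_trans (IH j) _; rewrite ge_max !le_max lexx Gk !orbT.
Qed.

Lemma ghat_iter_le_phi t : 0 <= t -> forall n j, ghat_iter t n j <= phi t.
Proof.
move=> t0 n j; apply: le_trans (linf_pos_le_supnorm (linf_pos_ghat_iter t0 n) j) _.
rewrite -[X in phi X](supnorm_cst I_inh t0).
exact: gain_MBI (linf_pos_ghat_iter t0 n) (linf_pos_cst I t0) (ghat_iter_le_max t0 n).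
Qed.

Lemma ghat_iter_le_super t f : 0 <= t -> linf_pos f -> (forall j, t <= f j) ->
  (forall j, G f j <= f j) -> forall n j, ghat_iter t n j <= f j.
Proof.
move=> t0 f_linf tf Gf; elim=> [|n IH] j; first exact: tf.
rewrite ghat_iterS /vmax ge_max IH /=; apply: le_trans (Gf j).
by apply: gainop_le => //; exact: linf_pos_ghat_iter.
Qed.

Lemma has_sup_ghat_iter t j : 0 <= t -> has_sup (range (fun n => ghat_iter t n j)).
Proof.
move=> t0; split; first by exists (ghat_iter t 0 j), 0%N.
by exists (phi t) => _ [n _ <-]; apply: ghat_iter_le_phi.
Qed.

Lemma ghat_iter_le_sigma_star t n j : 0 <= t -> ghat_iter t n j <= S t j.
Proof. by move=> t0; apply: sup_upper_bound; [exact: has_sup_ghat_iter | exists n]. Qed.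

Lemma sigma_star_le t j x : (forall n, ghat_iter t n j <= x) -> S t j <= x.
Proof.
move=> gx; rewrite /sigma_star; apply: ge_sup => [|_ [n _ <-]]; last exact: gx.
by exists (ghat_iter t 0 j), 0%N.
Qed.

Lemma le_sigma_star t j : 0 <= t -> t <= S t j.
Proof. exact: (ghat_iter_le_sigma_star 0). Qed.

Lemma linf_pos_sigma_star t : 0 <= t -> linf_pos (S t).
Proof.
move=> t0; split=> [j|]; first exact: le_trans t0 (le_sigma_star j t0).
by exists (phi t) => j; apply: sigma_star_le => n; apply: ghat_iter_le_phi.
Qed.

Lemma sigma_star_approx t j e : 0 <= t -> 0 < e -> exists n, S t j - e <= ghat_iter t n j.
Proof.
move=> t0 e0; have [_ [n _ <-] Sn] := sup_adherent e0 (has_sup_ghat_iter j t0).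
by exists n; rewrite ltW.
Qed.

Lemma sigma_star_fix t : 0 <= t -> S t = vmax (cstv t) (G (S t)).
Proof.
move=> t0; have S_linf := linf_pos_sigma_star t0.
have GS i : G (S t) i <= S t i.
  apply/ler_addgt0Pr => e e0.
  have [n Gn] := gainop_approx (linf_pos_ghat_iter t0) S_linf (@ghat_iter_mono t)
    (fun n j => ghat_iter_le_sigma_star n j t0)
    (fun j e e0 => sigma_star_approx j t0 e0) i e0.
  apply: le_trans Gn _; rewrite lerD2r.
  apply: le_trans (ghat_iter_le_sigma_star n.+1 i t0).
  by rewrite ghat_iterS /vmax le_max lexx orbT.
apply/funext => i; apply/le_anti/andP; split.
  apply: sigma_star_le => n; apply: le_trans (ghat_iter_le_max t0 n i) _.
  rewrite /vmax /cstv ge_max !le_max lexx (@gainop_le _ (S t)) ?orbT //.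
    exact: linf_pos_ghat_iter.
  by move=> j _; apply: ghat_iter_le_sigma_star.
by rewrite /vmax ge_max GS andbT; apply: le_sigma_star.
Qed.

Lemma sigma_star_le_fix t f : 0 <= t -> linf_pos f -> f = vmax (cstv t) (G f) ->
  forall j, S t j <= f j.
Proof.
move=> t0 f_linf ffix j; apply: sigma_star_le => n; apply: ghat_iter_le_super => // k.
  by rewrite ffix /vmax le_max lexx.
by rewrite {2}ffix /vmax le_max lexx orbT.
Qed.

Section UniqueFixedPoint.
Variables (rho : R -> R) (beta : R -> R -> R) (ginv : I -> I -> R -> R) (zeta : R -> R).
Hypothesis rho_K : is_K rho.
Hypothesis beta_KL : is_KL beta.
Hypothesis Grho_UGAS : forall s, linf_pos s -> forall n : nat,
  supnorm (iter n (Grho rho G) s) <= beta (supnorm s) n%:R.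
Hypothesis ginv_gam : forall i j, Ii i j -> forall r, 0 <= r -> ginv i j (gam i j r) = r.
Hypothesis ginv_equicont :
  pw_equicont (fun ij : I * I => Ii ij.1 ij.2) (fun ij => ginv ij.1 ij.2).
Hypothesis zeta_K : is_K zeta.
Hypothesis mu_gap : forall i j, Ii i j -> forall s1 s2, linf_pos s1 -> linf_pos s2 ->
  (forall k, s1 k <= s2 k) ->
  ((zeta (s2 j - s1 j))%:E <= mu i (restr (Ii i) s2) - mu i (restr (Ii i) s1))%E.
Hypothesis sigma_star_cont : forall r0, 0 <= r0 -> forall e, 0 < e -> exists d, 0 < d /\
  forall r, 0 <= r -> `|r - r0| <= d -> supnorm (fun i => S r i - S r0 i) <= e.

Lemma gainop_le_Grho s i : linf_pos s -> G s i <= Grho rho G s i.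
Proof. by move=> s_linf; rewrite /Grho lerDl (K_ge0 rho_K) ?gainop_ge0. Qed.

Lemma linf_pos_iter_Grho s : linf_pos s -> forall n, linf_pos (iter n (Grho rho G) s).
Proof.
move=> s_linf; elim=> [//|n IH] /=; set v := iter n _ s.
have [B B0 vB] := linf_pos_bounded IH; have [C GC] := gainop_bounded B0.
have GvC i : G v i <= C by apply: GC => // j; case/andP: (vB j).
split=> [i|]; first by apply: le_trans (gainop_le_Grho i IH); apply: gainop_ge0.
exists (C + rho C) => i; rewrite /Grho lerD // (K_le rho_K) ?gainop_ge0 //.
Qed.

(* [f = Gamma(f)] at every node from which [i] is reached by a path of length < [n] *)
Fixpoint gain_attained (f : I -> R) (n : nat) (i : I) : Prop :=
  if n is n'.+1 then f i = G f i /\ forall j, Ii i j -> gain_attained f n' j else True.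

Lemma gain_attained_le_iter f : linf_pos f ->
  forall n i, gain_attained f n i -> f i <= iter n (Grho rho G) f i.
Proof.
move=> f_linf; elim=> [//|n IH] i /= [-> fj].
apply: le_trans (gainop_le_Grho i (linf_pos_iter_Grho f_linf n)).
by apply: gainop_le => [||j ij]; [|exact: linf_pos_iter_Grho|apply: IH; apply: fj].
Qed.

Lemma gain_attained_small f e : linf_pos f -> 0 < e ->
  exists N, forall i, gain_attained f N i -> f i <= e.
Proof.
move=> f_linf e0; have [N bN] := KL_le_nat beta_KL (supnorm_ge0 f) e0.
exists N => i fi; apply: le_trans (gain_attained_le_iter f_linf fi) _.
apply: le_trans (linf_pos_le_supnorm (linf_pos_iter_Grho f_linf N) i) _.
exact: le_trans (Grho_UGAS f_linf N) bN.
Qed.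

Lemma gam_gap B d : 0 <= B -> 0 < d -> exists2 eta, 0 < eta &
  forall i j, Ii i j -> forall x y, 0 <= x -> x <= y -> y <= B -> d <= y - x ->
    eta <= gam i j y - gam i j x.
Proof.
move=> B0 d0; have [Y Y0 gY] := gam_bounded B0; have d2 : 0 < d / 2 by lra.
have [eta eta0 ginv_d] := pw_equicont_unif ginv_equicont Y0 d2.
exists eta => // i j ij x y x0 xy yB dxy; rewrite leNgt; apply/negP => small.
have gx0 := K_ge0 (gam_K ij) x0; have gxy := K_le (gam_K ij) x0 xy.
have y0 := le_trans x0 xy; have gyY := gY i j ij y (introT andP (conj y0 yB)).
have := ginv_d (i, j) ij (gam i j y) (gam i j x).
rewrite /= !ginv_gam // ?(le_trans gx0 gxy) ?gx0 ?gyY ?(le_trans gxy gyY) //.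
by rewrite !ger0_norm ?subr_ge0 // => /(_ isT isT (ltW small)); lra.
Qed.

Lemma gainop_gap B d : 0 <= B -> 0 < d -> exists2 c, 0 < c &
  forall s t, linf_pos s -> linf_pos t ->
    (forall k, s k <= t k) -> (forall k, t k <= B) ->
  forall i j, Ii i j -> d <= t j - s j -> c <= G t i - G s i.
Proof.
move=> B0 d0; have [eta eta0 geta] := gam_gap B0 d0.
exists (zeta eta) => [|s t s_linf t_linf st tB i j ij dst]; first exact: K_gt0.
have := mu_gap ij (linf_pos_gainarg i s_linf) (linf_pos_gainarg i t_linf)
  (gainarg_le s_linf (fun k (_ : Ii i k) => st k)).
rewrite /gainarg !restr_id !restr_in // -!/(gainarg i _).
rewrite -(fineK (gainarg_fin i s_linf)) -(fineK (gainarg_fin i t_linf)) -EFinB lee_fin.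
rewrite -!gainopE; apply: le_trans; apply: (K_le zeta_K (ltW eta0)).
by apply: geta; rewrite ?st ?tB //; case: s_linf.
Qed.

Section Gap.
Variables (r ts : R) (f : I -> R).
Hypotheses (r0 : 0 <= r) (r_lt_ts : r < ts) (f_linf : linf_pos f).
Hypotheses (f_fix : f = vmax (cstv r) (G f)) (f_le : forall j, f j <= S ts j).

Let ts0 : 0 <= ts. Proof. exact: le_trans r0 (ltW r_lt_ts). Qed.

Lemma unattained_gap n : exists2 dl, 0 < dl &
  forall i, ~ gain_attained f n i -> dl <= S ts i - f i.
Proof.
elim: n => [|n [dn dn0 gapn]]; first by exists 1 => // i [].
have S_linf := linf_pos_sigma_star ts0; have [B B0 SB] := linf_pos_bounded S_linf.
have [c c0 Gc] := gainop_gap B0 dn0.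
exists (Num.min (ts - r) c) => [|i ni]; first by rewrite lt_min subr_gt0 r_lt_ts c0.
have [Gfr|Gfr] := leP (G f i) r.
  have -> : f i = r by rewrite f_fix /vmax /cstv; apply/max_idPl.
  by rewrite ge_min lerD2r le_sigma_star.
have fiG : f i = G f i by rewrite {1}f_fix /vmax /cstv; apply/max_idPr/ltW.
have [j ij nj] : exists2 j, Ii i j & ~ gain_attained f n j.
  apply: contra_notP ni => nj; split=> // j ij.
  by apply: contra_notP nj => ?; exists j.
have := Gc f (S ts) f_linf S_linf f_le (fun k => proj2 (andP (SB k))) i j ij (gapn j nj).
have GS : G (S ts) i <= S ts i by rewrite {2}(sigma_star_fix ts0) /vmax le_max lexx orbT.
by rewrite ge_min => Gci; apply/orP; right; lra.
Qed.

Lemma sigma_star_gap : exists2 dl, 0 < dl & forall j, f j + dl <= S ts j.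
Proof.
have ts2 : 0 < ts / 2 by have := le_lt_trans r0 r_lt_ts; lra.
have [N small] := gain_attained_small f_linf ts2.
have [dN dN0 gapN] := unattained_gap N.
exists (Num.min (ts / 2) dN) => [|j]; first by rewrite lt_min ts2.
rewrite -lerBrDl ge_min; have [fj|nj] := pselect (gain_attained f N j).
  by have := small j fj; have := le_sigma_star j ts0; move=> *; apply/orP; left; lra.
by rewrite gapN ?orbT.
Qed.

End Gap.

Lemma fix_le_sigma_star r f : 0 <= r -> linf_pos f -> f = vmax (cstv r) (G f) ->
  forall j, f j <= S r j.
Proof.
move=> r0 f_linf f_fix; pose Q := [set t | r <= t /\ forall j, f j <= S t j].
suff [_ //] : Q r; apply: (@descent_to_lbound _ Q) => [|t []//|t rt Qt|t [rt ft] rlt].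
- exists (Num.max r (supnorm f)); split=> [|j]; first by rewrite le_max lexx.
  have t0 : 0 <= Num.max r (supnorm f) by rewrite le_max r0.
  apply: le_trans (linf_pos_le_supnorm f_linf j) (le_trans _ (le_sigma_star j t0)).
  by rewrite le_max lexx orbT.
- split=> // j; have t0 := le_trans r0 rt; apply/ler_addgt0Pr => e e0.
  have [d [d0 Sd]] := sigma_star_cont t0 e0.
  have [t' [_ ft'] /andP[tt' t'd]] := Qt d d0; have t'0 := le_trans t0 tt'.
  have := Sd t' t'0; rewrite ger0_norm ?subr_ge0 // => /(_ ltac:(lra)) Stt'.
  have := linf_pos_dist_le_supnorm (linf_pos_sigma_star t'0) (linf_pos_sigma_star t0) j.
  by rewrite ler_norml => /andP[_ ?]; have := ft' j; lra.
- have t0 := le_trans r0 (ltW rlt).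
  have [dl dl0 fdl] := sigma_star_gap r0 rlt f_linf f_fix ft.
  have [d [d0 Sd]] := sigma_star_cont t0 dl0; set t' := Num.max r (t - d).
  have rt' : r <= t' by rewrite le_max lexx.
  have t'0 := le_trans r0 rt'; have t'd : t - d <= t' by rewrite le_max lexx orbT.
  have t't : t' < t by rewrite gt_max rlt /=; lra.
  have Stt' : supnorm (fun i => S t' i - S t i) <= dl.
    by apply: Sd => //; rewrite ler_norml; apply/andP; split; lra.
  exists t' => //; split=> // j.
  have := linf_pos_dist_le_supnorm (linf_pos_sigma_star t'0) (linf_pos_sigma_star t0) j.
  by rewrite ler_norml => /andP[+ _]; have := fdl j; lra.
Qed.

Lemma sigma_star_unique_fix r : 0 <= r ->
  exists s : I -> R, (linf_pos s /\ s = vmax (cstv r) (G s)) /\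
    forall s', linf_pos s' -> s' = vmax (cstv r) (G s') -> s' = s.
Proof.
move=> r0; exists (S r); split.
  by split; [exact: linf_pos_sigma_star | exact: sigma_star_fix].
move=> s' s'_linf s'_fix; apply/funext => j; apply/le_anti.
by rewrite fix_le_sigma_star // sigma_star_le_fix.
Qed.

End UniqueFixedPoint.
End MinimalFixedPoint.
End GainOperator.

Unset Implicit Arguments. Set Strict Implicit.

Theorem proposition3p16 (R : realType) (I : countType) (I_nonempty : inhabited I)
  (Ii : I -> set I) (gam : I -> I -> R -> R) (mu : I -> (I -> R) -> \bar R)
  (Hgain : is_gain_operator Ii gam mu)
  (* (i) *)
  (Hmbi : oplus_MBI (gainop Ii gam mu))
  (* (ii) *)
  (Hrho : exists rho : R -> R, is_Kinf rho /\ UGAS (Grho rho (gainop Ii gam mu)))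
  (* (iii) *)
  (Hinv : exists ginv : I -> I -> R -> R,
     (forall i j, Ii i j -> forall r, 0 <= r ->
        ginv i j (gam i j r) = r /\ gam i j (ginv i j r) = r) /\
     pw_equicont (fun ij : I * I => Ii ij.1 ij.2) (fun ij => ginv ij.1 ij.2))
  (* (iv) *)
  (Hzeta : exists zeta : R -> R, is_Kinf zeta /\
     forall i j, Ii i j -> forall s1 s2 : I -> R, linf_pos s1 -> linf_pos s2 ->
       (forall k, s1 k <= s2 k) ->
       ((zeta (s2 j - s1 j))%:E <= mu i (restr (Ii i) s2) - mu i (restr (Ii i) s1))%E)
  (* (v) *)
  (Hsigma : forall r0, 0 <= r0 -> forall e, 0 < e -> exists d, 0 < d /\
     forall r, 0 <= r -> `|r - r0| <= d ->
       supnorm (fun i => sigma_star (gainop Ii gam mu) r i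
                         - sigma_star (gainop Ii gam mu) r0 i) <= e) :
  forall r : R, 0 <= r ->
    exists s : I -> R,
      (linf_pos s /\ s = vmax (cstv r) (gainop Ii gam mu s)) /\
      forall s' : I -> R, linf_pos s' -> s' = vmax (cstv r) (gainop Ii gam mu s') -> s' = s.
Proof.
move: Hgain => [Ii_fin [gam_Kinf [gam_equicont [[xi [_ mu_M1]] [mu_mono mu_M34]]]]].
have [mu_M3 mu_unif] := mu_M34.
have [phi [_ gain_MBI]] := Hmbi.
have [rho [[rho_K _] [beta [beta_KL Grho_UGAS]]]] := Hrho.
have [ginv [ginv_gam ginv_equicont]] := Hinv.
have [zeta [[zeta_K _] mu_gap]] := Hzeta.
have fin_Ii i : finite_set (Ii i) by case: (Ii_fin i).
move=> r r0; apply: (sigma_star_unique_fix fin_Ii _ gam_equicont _ mu_mono _ _ mu_unif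
  I_nonempty gain_MBI rho_K beta_KL Grho_UGAS _ ginv_equicont zeta_K mu_gap Hsigma r0).
- by move=> i j /gam_Kinf[].
- by move=> i; case: (mu_M1 i).
- by move=> i; case: (mu_M3 i _ (fin_Ii i)).
- by move=> i; case: (mu_M3 i _ (fin_Ii i)).
- by move=> i j ij x x0; case: (ginv_gam i j ij x x0).
Qed.
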